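(* Let $a=e_1=(1,0,\dots,0)$, let $P$ be a distribution on $\mathbb{R}^k$ with finite second moments and covariance $\Sigma$ whose minimal eigenvalue is $\gamma_{\min}>0$, and let $\widehat\Sigma$ be any non-random symmetric positive-definite matrix with $\|\widehat\Sigma-\Sigma\|_F\le\gamma_{\min}/2$. Let $\hat\theta_{\mathrm{MultiPPI}(\widehat\Sigma)}$ be computed on samples from $P$ (independent of nothing but themselves, as described in the context). Then \[ \mathbb{E}\Big[\big(\hat\theta_{\mathrm{MultiPPI}(\widehat\Sigma)}-\theta^*\big)^2\Big]\le\mathcal V_B+\frac{4\sigma^2_{\mathrm{classical}}}{\gamma_{\min}}\,\|\widehat\Sigma-\Sigma\|_F , \] where $\|\cdot\|_F$ is the Frobenius norm.
   Context: $X\sim P$ in $\mathbb{R}^k$, $\theta^*=a^\top\mathbb{E}X=\mathbb{E}X_1$. $\mathcal I$ is a collection of nonempty subsets of $\{1,\dots,k\}$; $P_I:\mathbb{R}^k\to\mathbb{R}^{|I|}$ is the coordinate projection onto $I$; for a matrix $A$, $A_I=P_IAP_I^\top$. Costs $c_I\in\mathbb{R}^m_{\ge0}$, budget $B\in\mathbb{R}^m_{\ge0}$, vector inequalities componentwise; an allocation $\underline n\in\mathbb{Z}^{\mathcal I}_{\ge0}$ is feasible if $\sum_In_Ic_I\le B$. Weights $\lambda_I\in\mathbb{R}^{|I|}$ are unbiased if $\sum_{I:n_I>0}P_I^\top\lambda_I=a$. For SPD $A$, $\hat\theta_{\mathrm{MultiPPI}(A)}=\sum_{I:n_I>0}\frac1{n_I}\sum_{j=1}^{n_I}\lambda_I^\top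 X_I^{(I,j)}$, where $(\underline n,\underline\lambda)$ minimizes $\sum_{I:n_I>0}\frac1{n_I}\lambda_I^\top A_I\lambda_I$ over feasible unbiased pairs and $X^{(I,j)}$ are mutually independent copies of $X\sim P$ (only coordinates $I$ observed). $\mathcal V_B$ is the minimum of $\sum_{I:n_I>0}\frac1{n_I}\lambda_I^\top\Sigma_I\lambda_I$ over feasible unbiased pairs. $\sigma^2_{\mathrm{classical}}=\min\Sigma_{11}/n^0_{I^0}$, the minimum over $I^0\in\mathcal I$ with $1\in I^0$, where $n^0_{I^0}$ is the largest integer $n$ with $nc_{I^0}\le B$; assume at least one such $I^0$ has $n^0_{I^0}\ge1$. *)

From HB Require Import structures.
From mathcomp Require Import all_boot all_order all_algebra.
From mathcomp Require Import all_classical all_reals all_analysis.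
Set Implicit Arguments. Unset Strict Implicit. Unset Printing Implicit Defensive.
Import Order.TTheory GRing.Theory Num.Theory.
Local Open Scope classical_set_scope.
Local Open Scope ring_scope.

(* Index sets I are elements of {set 'I_k}; coordinate 1 of the paper is the
   ordinal with value 0.  A weight lambda_I in R^{|I|} is represented by its
   zero-padding P_I^T lambda_I : 'cV_k (supported in I). Then
   lambda_I^T A_I lambda_I = (P_I^T lambda_I)^T A (P_I^T lambda_I) and
   lambda_I^T X_I = (P_I^T lambda_I)^T X. *)

Section MultiPPI.
Variable R : realType.

Definition e1 (k : nat) : 'cV[R]_k := \col_(i < k) (i == 0 :> nat)%:R.

Definition quad (k : nat) (A : 'M[R]_k) (v : 'cV[R]_k) : R := (v^T *m A *m v) 0 0.

Definition frob (k : nat) (A : 'M[R]_k) : R :=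
  Num.sqrt (\sum_(i < k) \sum_(j < k) A i j ^+ 2).

Definition sym_posdef (k : nat) (A : 'M[R]_k) : Prop :=
  A^T = A /\ forall v : 'cV[R]_k, v != 0 -> 0 < quad A v.

Definition weights_supported (k : nat) (lam : {set 'I_k} -> 'cV[R]_k) : Prop :=
  forall (I : {set 'I_k}) (i : 'I_k), i \notin I -> lam I i 0 = 0.

Definition feasible (k m : nat) (coll : {set {set 'I_k}})
    (c : {set 'I_k} -> 'rV[R]_m) (B : 'rV[R]_m) (n : {set 'I_k} -> nat) : Prop :=
  (forall I, I \notin coll -> n I = 0%N) /\
  forall r : 'I_m, \sum_(I in coll) (n I)%:R * c I 0 r <= B 0 r.

Definition unbiased (k : nat) (coll : {set {set 'I_k}}) (n : {set 'I_k} -> nat)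
    (lam : {set 'I_k} -> 'cV[R]_k) : Prop :=
  \sum_(I in coll | (0 < n I)%N) lam I = e1 k.

Definition admissible (k m : nat) (coll : {set {set 'I_k}})
    (c : {set 'I_k} -> 'rV[R]_m) (B : 'rV[R]_m)
    (n : {set 'I_k} -> nat) (lam : {set 'I_k} -> 'cV[R]_k) : Prop :=
  feasible coll c B n /\ weights_supported lam /\ unbiased coll n lam.

Definition objective (k : nat) (coll : {set {set 'I_k}}) (A : 'M[R]_k)
    (n : {set 'I_k} -> nat) (lam : {set 'I_k} -> 'cV[R]_k) : R :=
  \sum_(I in coll | (0 < n I)%N) (n I)%:R^-1 * quad A (lam I).

Definition is_minimizer (k m : nat) (coll : {set {set 'I_k}})
    (c : {set 'I_k} -> 'rV[R]_m) (B : 'rV[R]_m) (A : 'M[R]_k)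
    (n : {set 'I_k} -> nat) (lam : {set 'I_k} -> 'cV[R]_k) : Prop :=
  admissible coll c B n lam /\
  forall n' lam', admissible coll c B n' lam' ->
    objective coll A n lam <= objective coll A n' lam'.

Definition V_B (k m : nat) (coll : {set {set 'I_k}})
    (c : {set 'I_k} -> 'rV[R]_m) (B : 'rV[R]_m) (Sigma : 'M[R]_k) : R :=
  inf [set v | exists n lam, admissible coll c B n lam /\ v = objective coll Sigma n lam].

Definition sigma2_classical (k m : nat) (coll : {set {set 'I_k}})
    (c : {set 'I_k} -> 'rV[R]_m) (B : 'rV[R]_m) (Sigma : 'M[R]_k) (i1 : 'I_k) : R :=
  inf [set v | exists I0 n0, [/\ I0 \in coll, i1 \in I0, (1 <= n0)%N,
        ((forall r, n0%:R * c I0 0 r <= B 0 r) /\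
         (forall n', (forall r, n'%:R * c I0 0 r <= B 0 r) -> (n' <= n0)%N))
      & v = Sigma i1 i1 / n0%:R]].

End MultiPPI.

Section Prob.
Context {d : measure_display} {T : measurableType d} {R : realType}.
Variable Pr : probability T R.

Definition mean_vec (k : nat) (X : 'I_k -> T -> R) : 'cV[R]_k :=
  \col_i fine ('E_Pr[X i]).
Definition cov_mx (k : nat) (X : 'I_k -> T -> R) : 'M[R]_k :=
  \matrix_(i, j) fine (covariance Pr (X i) (X j)).

Definition rect_event (k : nat) (X : 'I_k -> T -> R) (A : 'I_k -> set R) : set T :=
  [set w | forall i, A i (X i w)].

(* Y has the same joint law as X (equality on measurable rectangles, which
   determine the law on the Borel sigma-algebra of R^k) *)
Definition same_law (k : nat) (Y X : 'I_k -> T -> R) : Prop :=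
  forall A : 'I_k -> set R, (forall i, measurable (A i)) ->
    Pr (rect_event Y A) = Pr (rect_event X A).

Definition mutually_independent (J : eqType) (S : J -> Prop) (k : nat)
    (Xs : J -> 'I_k -> T -> R) : Prop :=
  forall (s : seq J) (A : J -> 'I_k -> set R),
    uniq s -> (forall f, f \in s -> S f) ->
    (forall f i, measurable (A f i)) ->
    fine (Pr [set w | forall f, f \in s -> rect_event (Xs f) (A f) w]) =
    \prod_(f <- s) fine (Pr (rect_event (Xs f) (A f))).

Definition multippi_est (k : nat) (coll : {set {set 'I_k}})
    (n : {set 'I_k} -> nat) (lam : {set 'I_k} -> 'cV[R]_k)
    (Xs : {set 'I_k} * nat -> 'I_k -> T -> R) (w : T) : R :=
  \sum_(I in coll | (0 < n I)%N) (n I)%:R^-1 *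
     \sum_(j < n I) \sum_(i < k) lam I i 0 * Xs (I, (j : nat)) i w.

End Prob.

(* Because the samples are independent copies of X, the MultiPPI
   estimator for an allocation (n, lam) is unbiased with variance
   objective(Sigma) = sum_I (1/n_I) lam_I^T Sigma lam_I, so its mean squared
   error is exactly objective(Sigma) at the minimizer (n, lam) for Sigma_hat.
   With d = |Sigma_hat - Sigma|_F and D = d / gamma_min <= 1/2, the objectives
   for Sigma and Sigma_hat differ by at most d * W, where W = sum_I |lam_I|^2 / n_I
   is at most objective(Sigma) / gamma_min and objective(Sigma_hat) / (gamma_min - d),
   since gamma_min is the minimum of the Rayleigh quotient of Sigma.
   Comparing the minimizer with any admissible pair and with the classical
   allocation (one index set containing coordinate 1, weight e_1) gives
   objective(Sigma) <= x + 4 D Sigma_11 / n0 for every admissible value x and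
   every classical count n0; taking infima yields V_B + 4 D sigma^2_classical. *)

From HB Require Import structures.
From mathcomp Require Import all_boot all_order all_algebra.
From mathcomp Require Import all_classical all_reals all_analysis.
From mathcomp Require Import measurable_realfun.
From mathcomp Require Import ring lra.
Import Order.TTheory GRing.Theory Num.Theory.
Set Implicit Arguments. Unset Strict Implicit. Unset Printing Implicit Defensive.
Local Open Scope classical_set_scope.
Local Open Scope ring_scope.

Section quadratic_forms.
Variable R : realType.

Lemma ge0_quadratic_discr (a b c : R) :
  (forall t, 0 <= a * t ^+ 2 + b * t + c) -> b ^+ 2 <= 4 * a * c.
Proof.
move=> H; pose p := Poly [:: c; b; a].
have := @deg_le2_poly_ge0 _ p; rewrite size_Poly => /(_ isT).
have -> : p`_0 = c by rewrite /p !coefE.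
have -> : p`_1 = b by rewrite /p !coefE.
have -> : p`_2 = a by rewrite /p !coefE.
rewrite subr_le0; apply => t.
by rewrite horner_Poly /= mul0r add0r; have := H t; congr (_ <= _); ring.
Qed.

Lemma cauchy_schwarz_sum (I : finType) (a b : I -> R) :
  (\sum_i a i * b i) ^+ 2 <= (\sum_i a i ^+ 2) * (\sum_i b i ^+ 2).
Proof.
have : (2 * \sum_i a i * b i) ^+ 2 <= 4 * (\sum_i a i ^+ 2) * (\sum_i b i ^+ 2).
  apply: ge0_quadratic_discr => t.
  have -> : (\sum_i a i ^+ 2) * t ^+ 2 + 2 * (\sum_i a i * b i) * t + \sum_i b i ^+ 2
      = \sum_i (t * a i + b i) ^+ 2.
    rewrite [RHS](eq_bigr (fun i => t ^+ 2 * a i ^+ 2 + 2 * t * (a i * b i) + b i ^+ 2)).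
      by rewrite !big_split /= -!mulr_sumr; ring.
    by move=> i _; ring.
  by apply: sumr_ge0 => i _; exact: sqr_ge0.
by move=> H; rewrite -(@ler_pM2l _ 4) ?ltr0n //; move: H; congr (_ <= _); ring.
Qed.

Variable k : nat.
Implicit Types (A M : 'M[R]_k) (u v w : 'cV[R]_k).

Definition sqnorm v : R := \sum_i v i 0 ^+ 2.
Definition bform A u w : R := (u^T *m A *m w) 0 0.

Lemma bformE A u w : bform A u w = \sum_i \sum_j u i 0 * A i j * w j 0.
Proof.
rewrite /bform mxE exchange_big /=; apply: eq_bigr => j _.
by rewrite mxE mulr_suml; apply: eq_bigr => i _; rewrite mxE.
Qed.

Lemma quadE A v : quad A v = \sum_i \sum_j v i 0 * A i j * v j 0.
Proof. exact: bformE. Qed.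

Lemma sqnorm_ge0 v : 0 <= sqnorm v.
Proof. by apply: sumr_ge0 => i _; exact: sqr_ge0. Qed.

Lemma sqnormZ (c : R) v : sqnorm (c *: v) = c ^+ 2 * sqnorm v.
Proof. by rewrite /sqnorm mulr_sumr; apply: eq_bigr => i _; rewrite !mxE; ring. Qed.

Lemma frob_ge0 A : 0 <= frob A.
Proof. exact: sqrtr_ge0. Qed.

Lemma sqr_frob A : frob A ^+ 2 = \sum_i \sum_j A i j ^+ 2.
Proof. by rewrite sqr_sqrtr //; do 2![apply: sumr_ge0 => ? _]; exact: sqr_ge0. Qed.

Lemma frob_subC A M : frob (A - M) = frob (M - A).
Proof.
by rewrite /frob; congr Num.sqrt; do 2![apply: eq_bigr => ? _]; rewrite !mxE; ring.
Qed.

Lemma quadZ A (c : R) v : quad A (c *: v) = c ^+ 2 * quad A v.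
Proof.
rewrite !quadE mulr_sumr; apply: eq_bigr => i _.
by rewrite mulr_sumr; apply: eq_bigr => j _; rewrite !mxE; ring.
Qed.

Lemma quad0 A : quad A 0 = 0.
Proof. by rewrite -(scale0r (0 : 'cV[R]_k)) quadZ expr0n mul0r. Qed.

Lemma quadBl A M v : quad (A - M) v = quad A v - quad M v.
Proof.
rewrite !quadE -sumrB; apply: eq_bigr => i _.
by rewrite -sumrB; apply: eq_bigr => j _; rewrite !mxE; ring.
Qed.

Lemma quad_scalar_mx (c : R) v : quad c%:M v = c * sqnorm v.
Proof.
rewrite quadE /sqnorm mulr_sumr; apply: eq_bigr => i _.
rewrite (bigD1 i) //= big1 => [|j /negbTE ji]; last by rewrite !mxE eq_sym ji mulr0n mulr0 mul0r.
by rewrite !mxE eqxx mulr1n addr0; ring.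
Qed.

Lemma quadDZ A (t : R) u w :
  quad A (t *: u + w) = t ^+ 2 * quad A u + t * bform A u w + t * bform A w u + quad A w.
Proof.
rewrite !quadE !bformE !mulr_sumr -!big_split /=; apply: eq_bigr => i _.
by rewrite !mulr_sumr -!big_split /=; apply: eq_bigr => j _; rewrite !mxE; ring.
Qed.

Lemma bformC A u w : A^T = A -> bform A u w = bform A w u.
Proof.
move=> HA; rewrite !bformE exchange_big /=; apply: eq_bigr => i _; apply: eq_bigr => j _.
have -> : A j i = A^T i j by rewrite mxE.
by rewrite HA; ring.
Qed.

(* Cauchy-Schwarz in R^(k*k) for the entries of A and of u w^T. *)
Lemma sqr_bform_le A u w : bform A u w ^+ 2 <= frob A ^+ 2 * (sqnorm u * sqnorm w).
Proof.
have -> : bform A u w = \sum_(p : 'I_k * 'I_k) A p.1 p.2 * (u p.1 0 * w p.2 0).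
  rewrite bformE -(pair_bigA _ (fun i j => A i j * (u i 0 * w j 0))).
  by do 2![apply: eq_bigr => ? _]; ring.
have -> : frob A ^+ 2 = \sum_(p : 'I_k * 'I_k) A p.1 p.2 ^+ 2.
  by rewrite sqr_frob -(pair_bigA _ (fun i j => A i j ^+ 2)).
have -> : sqnorm u * sqnorm w = \sum_(p : 'I_k * 'I_k) (u p.1 0 * w p.2 0) ^+ 2.
  rewrite -(pair_bigA _ (fun i j => (u i 0 * w j 0) ^+ 2)) /sqnorm mulr_suml.
  by apply: eq_bigr => i _; rewrite mulr_sumr; apply: eq_bigr => j _; ring.
exact: cauchy_schwarz_sum.
Qed.

Lemma quad_abs_le A v : `|quad A v| <= frob A * sqnorm v.
Proof.
have H0 : 0 <= frob A * sqnorm v by rewrite mulr_ge0 ?frob_ge0 ?sqnorm_ge0.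
rewrite -(@ler_pXn2r _ 2) ?nnegrE ?normr_ge0 // real_normK ?num_real //.
by rewrite exprMn [sqnorm v ^+ 2]expr2; exact: sqr_bform_le.
Qed.

Lemma sqnorm_mulmx_le A v : sqnorm (A *m v) <= frob A ^+ 2 * sqnorm v.
Proof.
rewrite /sqnorm sqr_frob mulr_suml; apply: ler_sum => i _.
by rewrite mxE; exact: cauchy_schwarz_sum.
Qed.

Lemma bform_mulmx A v : bform A (A *m v) v = sqnorm (A *m v).
Proof.
rewrite bformE /sqnorm; apply: eq_bigr => i _.
by rewrite expr2 [X in _ = _ * X]mxE mulr_sumr; apply: eq_bigr => j _; ring.
Qed.

Section positive_semidefinite.
Variable M : 'M[R]_k.
Hypotheses (M_sym : M^T = M) (M_psd : forall v, 0 <= quad M v).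

Lemma sqr_bform_psd_le u w : bform M u w ^+ 2 <= quad M u * quad M w.
Proof.
have : (2 * bform M u w) ^+ 2 <= 4 * quad M u * quad M w.
  apply: ge0_quadratic_discr => t; have := M_psd (t *: u + w).
  by rewrite quadDZ (bformC u w M_sym); congr (_ <= _); ring.
by move=> H; rewrite -(@ler_pM2l _ 4) ?ltr0n //; move: H; congr (_ <= _); ring.
Qed.

Lemma psd_sqnorm_mulmx_le v : sqnorm (M *m v) <= frob M * quad M v.
Proof.
have := sqr_bform_psd_le (M *m v) v; rewrite bform_mulmx => H.
have HMv : quad M (M *m v) <= frob M * sqnorm (M *m v).
  exact: le_trans (ler_norm _) (quad_abs_le _ _).
have := sqnorm_ge0 (M *m v); rewrite le_eqVlt => /orP[/eqP <-|pos].
  by rewrite mulr_ge0 ?frob_ge0.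
rewrite -(@ler_pM2l _ (sqnorm (M *m v))) // -expr2 (le_trans H) //.
by rewrite mulrA [_ * frob M]mulrC ler_wpM2r.
Qed.

(* Were [M] invertible, [quad M] would be bounded below on the unit sphere by
   [1 / (frob M^-1 ^+ 2 * frob M)]. *)
Lemma psd_det0 : (forall e, 0 < e -> exists2 u, sqnorm u = 1 & quad M u < e) -> \det M = 0.
Proof.
move=> small; apply/eqP/negPn/negP => dM.
have uM : M \in unitmx by rewrite unitmxE unitfE.
set C := frob (invmx M) ^+ 2 * frob M.
have C0 : 0 <= C by rewrite mulr_ge0 ?sqr_ge0 ?frob_ge0.
have lb v : sqnorm v <= C * quad M v.
  rewrite -{1}(mulKmx uM v) -mulrA (le_trans (sqnorm_mulmx_le _ _)) //.
  by apply: ler_wpM2l; [exact: sqr_ge0|exact: psd_sqnorm_mulmx_le].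
have [|u u1 Hu] := small (C + 1)^-1; first by rewrite invr_gt0 ltr_wpDl.
have := lb u; rewrite u1 => /le_trans/(_ (ler_wpM2l C0 (ltW Hu))).
by rewrite -/(_ / _) ler_pdivlMr ?ltr_wpDl // mul1r; lra.
Qed.

End positive_semidefinite.

Definition rayleigh_min A : R := inf [set quad A u | u in [set u | sqnorm u = 1]]%classic.

Lemma rayleigh_min_lbound A : has_lbound [set quad A u | u in [set u | sqnorm u = 1]]%classic.
Proof.
exists (- frob A) => _ [u /= u1 <-].
by have := quad_abs_le A u; rewrite u1 mulr1 ler_norml => /andP[].
Qed.

Lemma rayleigh_min_le A v : rayleigh_min A * sqnorm v <= quad A v.
Proof.
have := sqnorm_ge0 v; rewrite le_eqVlt => /orP[/eqP v0|vpos].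
  have := quad_abs_le A v; rewrite -v0 !mulr0 normr_le0 => /eqP ->; exact: lexx.
set s := Num.sqrt (sqnorm v).
have s0 : 0 < s by rewrite sqrtr_gt0.
have u1 : sqnorm (s^-1 *: v) = 1.
  by rewrite sqnormZ exprVn sqr_sqrtr ?sqnorm_ge0 // mulVf // gt_eqF.
have := ge_inf (rayleigh_min_lbound A) (ex_intro2 _ _ (s^-1 *: v) u1 erefl).
by rewrite quadZ exprVn sqr_sqrtr ?sqnorm_ge0 // mulrC -/(_ / _) ler_pdivlMr.
Qed.

(* [A - rayleigh_min A] is positive semidefinite with infimum 0 on the sphere,
   hence singular. *)
Lemma eigenvalue_rayleigh_min A : (0 < k)%N -> A^T = A -> eigenvalue A (rayleigh_min A).
Proof.
move=> k0 A_sym; set mu := rayleigh_min A; pose M := A - mu%:M.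
have M_sym : M^T = M by rewrite /M linearB /= A_sym tr_scalar_mx.
have M_psd v : 0 <= quad M v by rewrite quadBl quad_scalar_mx subr_ge0 rayleigh_min_le.
have sphere0 : ([set quad A u | u in [set u | sqnorm u = 1]]%classic !=set0)%classic.
  pose e := \col_(i < k) (i == Ordinal k0)%:R : 'cV[R]_k.
  exists (quad A e), e => //=; rewrite /sqnorm (bigD1 (Ordinal k0)) //= big1 => [|j /negbTE ji].
    by rewrite mxE eqxx expr1n addr0.
  by rewrite mxE ji expr0n.
have : \det M = 0.
  apply: psd_det0 M_sym M_psd _ => e e0.
  have [_ [u /= u1 <-] Hu] := inf_adherent e0 (conj sphere0 (rayleigh_min_lbound A)).
  by exists u => //; rewrite quadBl quad_scalar_mx u1 mulr1 ltrBlDl.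
move/eqP/det0P => [v v0 vM]; apply/eigenvalueP; exists v => //.
by apply/eqP; rewrite -subr_eq0 -mul_mx_scalar -mulmxBr vM.
Qed.

Lemma quad_ge_min_eigenvalue A (g : R) : A^T = A ->
  (forall x, eigenvalue A x -> g <= x) -> forall v, g * sqnorm v <= quad A v.
Proof.
move=> A_sym Hmin v; case: (posnP k) => [k0|kpos].
  have no_index (i : 'I_k) : False by case: i => i; rewrite k0.
  by rewrite quadE /sqnorm !big1 ?mulr0 // => i; case: (no_index i).
apply: le_trans (rayleigh_min_le A v).
by rewrite ler_wpM2r ?sqnorm_ge0 // Hmin // eigenvalue_rayleigh_min.
Qed.

End quadratic_forms.

Section law_transfer.
Context d (T : measurableType d) (R : realType) (Pr : probability T R).
Local Open Scope ereal_scope.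

Definition same_dist (U U' : {RV Pr >-> R}) : Prop :=
  forall A, measurable A -> Pr (U @^-1` A) = Pr (U' @^-1` A).

Lemma same_dist_distribution (U U' : {RV Pr >-> R}) :
  same_dist U U' -> forall A, measurable A ->
  distribution Pr U A = distribution Pr U' A.
Proof. by move=> HA A mA; rewrite /distribution /pushforward HA. Qed.

Lemma ge0_integral_same_dist (U U' : {RV Pr >-> R}) (h : R -> \bar R) :
  same_dist U U' -> measurable_fun setT h -> (forall y, 0 <= h y) ->
  \int[Pr]_x h (U x) = \int[Pr]_x h (U' x).
Proof.
move=> HA mh h0.
rewrite -(ge0_integral_distribution U mh h0) -(ge0_integral_distribution U' mh h0).
by apply: eq_measure_integral => A mA _; exact: same_dist_distribution.
Qed.

Lemma expectation_same_dist (U U' : {RV Pr >-> R}) : same_dist U U' ->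
  (U : T -> R) \in Lfun Pr 1 -> (U' : T -> R) \in Lfun Pr 1 ->
  'E_Pr[U] = 'E_Pr[U'].
Proof.
move=> HA /Lfun1_integrable iU /Lfun1_integrable iU'; rewrite !unlock.
have mE : measurable_fun [set: R] (EFin \o (@id R)) by apply/measurable_EFinP.
rewrite -(integral_distribution mE iU) -(integral_distribution mE iU').
by apply: eq_measure_integral => A mA _; exact: same_dist_distribution.
Qed.

Lemma Lfun2_same_dist (U U' : {RV Pr >-> R}) : same_dist U U' ->
  (U' : T -> R) \in Lfun Pr 2%:E -> (U : T -> R) \in Lfun Pr 2%:E.
Proof.
move=> HA; rewrite !inE => /andP[_]; rewrite !inE /= /finite_norm => HU'.
apply/andP; split; first by rewrite inE; exact: measurable_funP.
rewrite inE /= /finite_norm; suff -> : 'N[Pr]_2%:E [EFin \o U] = 'N[Pr]_2%:E [EFin \o U'] by [].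
rewrite unlock; congr (_ `^ _).
apply: (ge0_integral_same_dist (h := fun y => `|y%:E| `^ 2)) => // [|y]; last exact: poweR_ge0.
apply: (eq_measurable_fun (fun y : R => (`|y| `^ 2)%:E)) => [y _|]; first by rewrite poweR_EFin.
by apply/measurable_EFinP; apply: (measurableT_comp (measurable_powR _)); exact: normr_measurable.
Qed.

Definition pair_rv (U V : {RV Pr >-> R}) : T -> (R * R)%type := fun w => (U w, V w).

Lemma pair_rv_measurable (U V : {RV Pr >-> R}) : measurable_fun setT (pair_rv U V).
Proof. by apply: measurable_fun_pair; exact: measurable_funP. Qed.

HB.instance Definition _ (U V : {RV Pr >-> R}) :=
  isMeasurableFun.Build _ _ _ _ (pair_rv U V) (pair_rv_measurable U V).

Lemma pair_rv_preimage (U V : {RV Pr >-> R}) (A B : set R) :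
  pair_rv U V @^-1` (A `*` B) = U @^-1` A `&` V @^-1` B.
Proof. by apply/seteqP; split=> x. Qed.

(* A law on [R * R] is determined by its values on measurable rectangles. *)
Lemma integral_same_joint_dist (U V U' V' : {RV Pr >-> R}) (h : (R * R)%type -> \bar R) :
  (forall A B, measurable A -> measurable B ->
     Pr (U @^-1` A `&` V @^-1` B) = Pr (U' @^-1` A `&` V' @^-1` B)) ->
  measurable_fun setT h ->
  Pr.-integrable setT (h \o pair_rv U V) -> Pr.-integrable setT (h \o pair_rv U' V') ->
  \int[Pr]_x h (pair_rv U V x) = \int[Pr]_x h (pair_rv U' V' x).
Proof.
move=> HAB mh i1 i2.
rewrite -(integral_distribution mh i1) -(integral_distribution mh i2).
apply: eq_measure_integral => A mA _.
apply: (measure_unique [set A `*` B | A in measurable & B in measurable] (fun=> setT)) => //.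
- exact: measurable_prod_measurableType.
- move=> _ _ [A1 mA1 [B1 mB1 <-]] [A2 mA2 [B2 mB2 <-]]; rewrite -setXI.
  by exists (A1 `&` A2); [exact: measurableI|exists (B1 `&` B2) => //; exact: measurableI].
- by move=> _; exists setT => //; exists setT => //; exact: setXTT.
- by rewrite -subTset => x _; exists 0%N.
- by move=> _ [A1 mA1 [B1 mB1 <-]]; rewrite /= /distribution /pushforward !pair_rv_preimage HAB.
- by move=> _; rewrite (le_lt_trans (probability_le1 _ _)) ?ltry.
Qed.

Lemma measurable_mulEFin : measurable_fun [set: (R * R)%type] (fun z : R * R => (z.1 * z.2)%:E).
Proof.
apply/(measurable_EFinP _ (fun z : R * R => z.1 * z.2)%R).
by apply: measurable_funM; [exact: measurable_fst|exact: measurable_snd].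
Qed.

Lemma integrable_distribution_id (U : {RV Pr >-> R}) :
  Pr.-integrable setT (EFin \o U) -> (distribution Pr U).-integrable setT EFin.
Proof.
move=> iU; apply/integrableP; split; first by apply/(measurable_EFinP _ id).
rewrite ge0_integral_distribution //; first by move/integrableP: iU => [].
by apply: measurableT_comp => //; apply/(measurable_EFinP _ id).
Qed.

Lemma integral_distribution_id (U : {RV Pr >-> R}) :
  Pr.-integrable setT (EFin \o U) ->
  \int[distribution Pr U]_y y%:E = \int[Pr]_x (U x)%:E.
Proof.
have mE : measurable_fun [set: R] (EFin \o (@id R)) by apply/measurable_EFinP.
exact: integral_distribution mE.
Qed.

(* Independence makes the joint law of [(U, V)] the product of the marginals,
   and Fubini then splits [E[UV]]. *)
Lemma expectation_mul_indep (U V : {RV Pr >-> R}) :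
  (forall A B, measurable A -> measurable B ->
     Pr (U @^-1` A `&` V @^-1` B) = Pr (U @^-1` A) * Pr (V @^-1` B)) ->
  (U : T -> R) \in Lfun Pr 1 -> (V : T -> R) \in Lfun Pr 1 ->
  ((U : T -> R) \* V)%R \in Lfun Pr 1 ->
  'E_Pr[(U : T -> R) \* V] = 'E_Pr[U] * 'E_Pr[V].
Proof.
move=> HAB /Lfun1_integrable iU /Lfun1_integrable iV /Lfun1_integrable iUV.
pose h := fun z : R * R => (z.1 * z.2)%:E.
pose mu1 := distribution Pr U; pose mu2 := distribution Pr V.
have prodE X : measurable X -> (mu1 \x mu2) X = distribution Pr (pair_rv U V) X.
  by move=> mX; apply: product_measure_unique => // A B mA mB;
    rewrite /= /distribution /pushforward pair_rv_preimage HAB.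
have ih : Pr.-integrable setT (h \o pair_rv U V) by [].
have ihp : (mu1 \x mu2).-integrable setT h.
  apply/integrableP; split; first exact: measurable_mulEFin.
  rewrite (eq_measure_integral (distribution Pr (pair_rv U V))); last first.
    by move=> A mA _; exact: prodE.
  rewrite ge0_integral_distribution //; last first.
    by apply: measurableT_comp => //; exact: measurable_mulEFin.
  by move/integrableP: ih => [].
rewrite unlock; transitivity (\int[Pr]_x (h \o pair_rv U V) x) => //.
rewrite -(integral_distribution measurable_mulEFin ih).
rewrite (eq_measure_integral (mu1 \x mu2)); last by move=> A mA _; exact/esym/prodE.
rewrite -integral12_prod_meas1 //.
have fV : \int[Pr]_x (V x)%:E \is a fin_num by exact: integrable_fin_num.
transitivity (\int[mu1]_x (x%:E * (fine (\int[Pr]_x (V x)%:E))%:E)).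
  apply: eq_integral => x _; rewrite /fubini_F /h /=.
  under eq_integral do rewrite EFinM.
  by rewrite integralZl ?integrable_distribution_id // integral_distribution_id // fineK // muleC.
by rewrite integralZr ?integrable_distribution_id // integral_distribution_id // fineK.
Qed.

End law_transfer.

Section real_moments.
Context d (T : measurableType d) (R : realType) (Pr : probability T R).

Definition Er (U : T -> R) : R := fine 'E_Pr[U].
Definition covr (U V : T -> R) : R := fine (covariance Pr U V).

Lemma Lfun2_Lfun1 (U : T -> R) : U \in Lfun Pr 2%:E -> U \in Lfun Pr 1.
Proof. by apply: Lfun_subset12; exact: fin_num_measure. Qed.

Lemma Lfun_scalel (p : R) (U : T -> R) c : (1 <= p) ->
  U \in Lfun Pr p%:E -> (fun w => c * U w) \in Lfun Pr p%:E.
Proof.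
move=> p1 HU; rewrite (_ : (fun w => c * U w) = c \o* U); first exact: Lfun_scale.
by apply/funext => w; rewrite /= mulrC.
Qed.

Lemma Lfun_sum (p : R) (J : Type) (s : seq J) (P : pred J) (Y : J -> T -> R) :
  (1 <= p) -> (forall a, P a -> Y a \in Lfun Pr p%:E) ->
  (fun w => \sum_(a <- s | P a) Y a w) \in Lfun Pr p%:E.
Proof. by move=> p1 HY; rewrite -fct_sumE; apply: rpred_sum => //; rewrite lee_fin. Qed.

Lemma covr_fin (U V : T -> R) : U \in Lfun Pr 2%:E -> V \in Lfun Pr 2%:E ->
  covariance Pr U V = (covr U V)%:E.
Proof.
move=> HU HV; rewrite fineK //.
by apply: covariance_fin_num; [exact: Lfun2_Lfun1|exact: Lfun2_Lfun1|exact: Lfun2_mul_Lfun1].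
Qed.

Lemma covrC (U V : T -> R) : covr U V = covr V U.
Proof. by rewrite /covr covarianceC. Qed.

Lemma covrZl (U V : T -> R) c : U \in Lfun Pr 2%:E -> V \in Lfun Pr 2%:E ->
  covr (fun w => c * U w) V = c * covr U V.
Proof.
move=> HU HV; rewrite (_ : (fun w => c * U w) = c \o* U); last first.
  by apply/funext => w; rewrite /= mulrC.
rewrite /covr covarianceZl ?(covr_fin HU HV) //; try exact: Lfun2_Lfun1.
exact: Lfun2_mul_Lfun1.
Qed.

Lemma covrZr (U V : T -> R) c : U \in Lfun Pr 2%:E -> V \in Lfun Pr 2%:E ->
  covr U (fun w => c * V w) = c * covr U V.
Proof. by move=> HU HV; rewrite covrC covrZl // covrC. Qed.

Lemma covr_suml (J : Type) (s : seq J) (P : pred J) (Y : J -> T -> R) (V : T -> R) :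
  (forall a, P a -> Y a \in Lfun Pr 2%:E) -> V \in Lfun Pr 2%:E ->
  covr (fun w => \sum_(a <- s | P a) Y a w) V = \sum_(a <- s | P a) covr (Y a) V.
Proof.
move=> HY HV; rewrite -fct_sumE.
suff [] : (\sum_(a <- s | P a) Y a) \in Lfun Pr 2%:E /\
    covr (\sum_(a <- s | P a) Y a) V = \sum_(a <- s | P a) covr (Y a) V by [].
apply: (big_rec2 (fun U x => U \in Lfun Pr 2%:E /\ covr U V = x)).
  by split; [exact: (Lfun_cst _ _ 2%R)|rewrite /covr covariance_cst_l].
move=> a U x Pa [HU <-]; have HYa := HY a Pa.
split; first by apply: rpredD; [rewrite lee1n|move=> ?; exact: HYa|move=> ?; exact: HU].
by rewrite /covr [covariance _ _ _](covarianceDl HYa HU HV) (covr_fin HYa HV) (covr_fin HU HV).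
Qed.

Lemma covr_sumr (J : Type) (s : seq J) (P : pred J) (Y : J -> T -> R) (V : T -> R) :
  (forall a, P a -> Y a \in Lfun Pr 2%:E) -> V \in Lfun Pr 2%:E ->
  covr V (fun w => \sum_(a <- s | P a) Y a w) = \sum_(a <- s | P a) covr V (Y a).
Proof.
by move=> HY HV; rewrite covrC covr_suml //; apply: eq_bigr => a _; rewrite covrC.
Qed.

Lemma Er_scale (U : T -> R) c : U \in Lfun Pr 1 -> Er (fun w => c * U w) = c * Er U.
Proof.
move=> HU; rewrite (_ : (fun w => c * U w) = c \o* U); last first.
  by apply/funext => w; rewrite /= mulrC.
by rewrite /Er expectationZl // fineM //; exact: expectation_fin_num.
Qed.

Lemma Er_sum (J : Type) (s : seq J) (P : pred J) (Y : J -> T -> R) :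
  (forall a, P a -> Y a \in Lfun Pr 1) ->
  Er (fun w => \sum_(a <- s | P a) Y a w) = \sum_(a <- s | P a) Er (Y a).
Proof.
move=> HY; rewrite -fct_sumE.
suff [] : (\sum_(a <- s | P a) Y a) \in Lfun Pr 1 /\
    Er (\sum_(a <- s | P a) Y a) = \sum_(a <- s | P a) Er (Y a) by [].
apply: (big_rec2 (fun U x => U \in Lfun Pr 1 /\ Er U = x)).
  by split; [exact: (Lfun_cst _ _ 1%R)|rewrite /Er expectation_cst].
move=> a U x Pa [HU <-]; have HYa := HY a Pa.
split; first by apply: rpredD.
by rewrite /Er expectationD // fineD //; exact: expectation_fin_num.
Qed.

End real_moments.

Section samples.
Context d (T : measurableType d) (R : realType) (Pr : probability T R).
Variables (k : nat) (X : 'I_k -> {RV Pr >-> R}) (J : eqType)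
  (Xs : J -> 'I_k -> {RV Pr >-> R}) (S : J -> Prop).
Hypothesis HX2 : forall i, (X i : T -> R) \in Lfun Pr 2%:E.
Hypothesis Hlaw : forall f, same_law Pr (fun i => Xs f i) (fun i => X i).
Hypothesis Hind : mutually_independent Pr S (fun f i => Xs f i).

Let rect2 (i j : 'I_k) (A B : set R) : 'I_k -> set R :=
  fun l => (if l == i then A else setT) `&` (if l == j then B else setT).

Let rect2_measurable i j A B : measurable A -> measurable B ->
  forall l, measurable (rect2 i j A B l).
Proof. by move=> mA mB l; apply: measurableI; case: ifP. Qed.

Let rect_event_rect2 (Y : 'I_k -> T -> R) i j A B :
  rect_event Y (rect2 i j A B) = Y i @^-1` A `&` Y j @^-1` B.
Proof.
apply/seteqP; split => w /=.
  by move=> H; split; [have := H i|have := H j]; rewrite /rect2 eqxx => -[].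
by move=> [HA HB] l; rewrite /rect2; split; case: eqP => // ->.
Qed.

Lemma sample_joint_law f i j A B : measurable A -> measurable B ->
  Pr (Xs f i @^-1` A `&` Xs f j @^-1` B) = Pr (X i @^-1` A `&` X j @^-1` B).
Proof. by move=> mA mB; have := Hlaw f (rect2_measurable i j mA mB); rewrite !rect_event_rect2. Qed.

Lemma sample_same_dist f i : same_dist (Xs f i) (X i).
Proof. by move=> A mA; have := sample_joint_law f i i mA mA; rewrite !setIid. Qed.

Lemma sample_indep f g i j A B : S f -> S g -> f != g -> measurable A -> measurable B ->
  Pr (Xs f i @^-1` A `&` Xs g j @^-1` B) = (Pr (Xs f i @^-1` A) * Pr (Xs g j @^-1` B))%E.
Proof.
move=> Sf Sg fg mA mB.
pose F h := if h == f then rect2 i i A A else if h == g then rect2 j j B B else fun=> setT.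
have mF h l : measurable (F h l).
  by rewrite /F; case: ifP => _; [|case: ifP => _ //]; exact: rect2_measurable.
have Ff : F f = rect2 i i A A by rewrite /F eqxx.
have Fg : F g = rect2 j j B B by rewrite /F eq_sym (negbTE fg) eqxx.
have uf : uniq [:: f; g] by rewrite /= inE andbT.
have Sfg h : h \in [:: f; g] -> S h by rewrite !inE => /orP[] /eqP ->.
have := Hind uf Sfg mF; rewrite !big_cons big_nil mulr1 Ff Fg !rect_event_rect2 !setIid.
have -> : [set w | forall h, h \in [:: f; g] -> rect_event (fun l => Xs h l) (F h) w] =
    Xs f i @^-1` A `&` Xs g j @^-1` B.
  rewrite -(setIid (Xs f i @^-1` A)) -(setIid (Xs g j @^-1` B)).
  rewrite -!(rect_event_rect2 (fun l => Xs _ l)).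
  apply/seteqP; split => w /=.
    by move=> H; split; [rewrite -Ff|rewrite -Fg]; apply: H; rewrite !inE eqxx ?orbT.
  by move=> [H1 H2] h; rewrite !inE => /orP[] /eqP ->; [rewrite Ff|rewrite Fg].
have mAi : measurable (Xs f i @^-1` A) by exact: measurable_funPTI.
have mBj : measurable (Xs g j @^-1` B) by exact: measurable_funPTI.
move=> H; rewrite -[LHS]fineK; last by apply: fin_num_measure; exact: measurableI.
by rewrite H EFinM !fineK //; exact: fin_num_measure.
Qed.

Lemma Lfun2_sample f i : (Xs f i : T -> R) \in Lfun Pr 2%:E.
Proof. exact: Lfun2_same_dist (sample_same_dist f i) (HX2 i). Qed.

Lemma expectation_sample f i : ('E_Pr[Xs f i] = 'E_Pr[X i])%E.
Proof.
apply: expectation_same_dist (sample_same_dist f i) _ _; apply: Lfun2_Lfun1.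
  exact: Lfun2_sample.
exact: HX2.
Qed.

Lemma covr_sample f i j : covr Pr (Xs f i) (Xs f j) = covr Pr (X i) (X j).
Proof.
have Xsij := Lfun2_mul_Lfun1 (Lfun2_sample f i) (Lfun2_sample f j).
have Xij := Lfun2_mul_Lfun1 (HX2 i) (HX2 j).
have L1s l : (Xs f l : T -> R) \in Lfun Pr 1 by exact/Lfun2_Lfun1/Lfun2_sample.
have L1 l : (X l : T -> R) \in Lfun Pr 1 by exact/Lfun2_Lfun1/HX2.
rewrite /covr !covarianceE ?expectation_sample //.
congr (fine (_ - _)); rewrite !unlock.
apply: (integral_same_joint_dist (h := fun z => (z.1 * z.2)%:E)).
- by move=> A B mA mB; exact: sample_joint_law.
- exact: measurable_mulEFin.
- exact/Lfun1_integrable.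
- exact/Lfun1_integrable.
Qed.

Lemma covr_indep_samples f g i j : S f -> S g -> f != g -> covr Pr (Xs f i) (Xs g j) = 0.
Proof.
move=> Sf Sg fg.
have L1 h l : (Xs h l : T -> R) \in Lfun Pr 1 by exact/Lfun2_Lfun1/Lfun2_sample.
rewrite /covr covarianceE ?Lfun2_mul_Lfun1 ?Lfun2_sample //.
rewrite (expectation_mul_indep (U := Xs f i) (V := Xs g j)) ?Lfun2_mul_Lfun1 ?Lfun2_sample //.
  by rewrite subee // fin_numM // expectation_fin_num.
by move=> A B mA mB; exact: sample_indep.
Qed.

End samples.

Section multippi_moments.
Context d (T : measurableType d) (R : realType) (Pr : probability T R).
Variables (k : nat) (coll : {set {set 'I_k}}) (n : {set 'I_k} -> nat)
  (lam : {set 'I_k} -> 'cV[R]_k) (X : 'I_k -> {RV Pr >-> R})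
  (Xs : {set 'I_k} * nat -> 'I_k -> {RV Pr >-> R}).
Hypothesis HX2 : forall i, (X i : T -> R) \in Lfun Pr 2%:E.
Hypothesis Hlaw : forall f, same_law Pr (fun i => Xs f i) (fun i => X i).
Hypothesis Hind : mutually_independent Pr
  (fun f : {set 'I_k} * nat => f.1 \in coll /\ (f.2 < n f.1)%N) (fun f i => Xs f i).

Let used I := (I \in coll) && (0 < n I)%N.
Let Sigma := cov_mx Pr (fun i => X i).
Let est := multippi_est coll n lam (fun f i => Xs f i).

Definition sample_stat (I : {set 'I_k}) (j : nat) : T -> R :=
  fun w => \sum_(i < k) lam I i 0 * Xs (I, j) i w.
Definition group_sum (I : {set 'I_k}) : T -> R := fun w => \sum_(j < n I) sample_stat I j w.

Let estE : est = fun w => \sum_(I | used I) (n I)%:R^-1 * group_sum I w.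
Proof. by []. Qed.

Let two_ge1 : 1 <= 2 :> R. Proof. by rewrite ler1n. Qed.
Let Lfun2_Xs f i : (Xs f i : T -> R) \in Lfun Pr 2%:E := Lfun2_sample HX2 Hlaw f i.

Lemma Lfun2_sample_stat I j : sample_stat I j \in Lfun Pr 2%:E.
Proof. by apply: Lfun_sum _ two_ge1 _ => i _; exact: (Lfun_scalel _ two_ge1). Qed.

Lemma Lfun2_group_sum I : group_sum I \in Lfun Pr 2%:E.
Proof. by apply: Lfun_sum _ two_ge1 _ => // j _; exact: Lfun2_sample_stat. Qed.

Lemma Lfun2_multippi_est : est \in Lfun Pr 2%:E.
Proof.
rewrite estE; apply: Lfun_sum _ two_ge1 _ => I _.
exact/(Lfun_scalel _ two_ge1)/Lfun2_group_sum.
Qed.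

Lemma covr_sample_stat I I' (j j' : nat) : I \in coll -> I' \in coll ->
  (j < n I)%N -> (j' < n I')%N ->
  covr Pr (sample_stat I j) (sample_stat I' j') =
  if (I == I') && (j == j') then quad Sigma (lam I) else 0.
Proof.
move=> Ic I'c jn j'n.
have L2_term I1 j1 i : (fun w => lam I1 i 0 * Xs (I1, j1) i w) \in Lfun Pr 2%:E.
  exact: (Lfun_scalel _ two_ge1).
rewrite {1}/sample_stat covr_suml ?Lfun2_sample_stat //.
under eq_bigr => i _.
  rewrite covrZl ?Lfun2_sample_stat // /sample_stat covr_sumr //.
  under eq_bigr => i' _ do rewrite covrZr //.
  over.
case: ifP => [/andP[/eqP <- /eqP <-]|ne].
  rewrite quadE; apply: eq_bigr => i _; rewrite mulr_sumr; apply: eq_bigr => i' _.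
  by rewrite (covr_sample HX2 Hlaw) /Sigma /cov_mx mxE /covr; ring.
apply: big1 => i _; rewrite big1 ?mulr0 // => i' _.
rewrite (covr_indep_samples HX2 Hlaw Hind) ?mulr0 //.
by apply/negP => /eqP [eI ej]; move: ne; rewrite eI ej !eqxx.
Qed.

Lemma covr_group_sum I I' : used I -> used I' ->
  covr Pr (group_sum I) (group_sum I') = if I == I' then (n I)%:R * quad Sigma (lam I) else 0.
Proof.
move=> /andP[Ic _] /andP[I'c _].
rewrite {1}/group_sum covr_suml ?Lfun2_group_sum // => [|j _]; last exact: Lfun2_sample_stat.
under eq_bigr => j _.
  rewrite /group_sum covr_sumr ?Lfun2_sample_stat // => [|j' _]; last exact: Lfun2_sample_stat.
  under eq_bigr => j' _ do rewrite covr_sample_stat //.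
  over.
case: (eqVneq I I') => [<-|ne]; last by apply: big1 => j _; apply: big1.
rewrite (eq_bigr (fun=> quad Sigma (lam I))) ?big_const_ord ?iter_addr_0 ?mulr_natl // => j _.
rewrite (bigD1 j) //= !eqxx big1 ?addr0 // => j' ne.
by rewrite val_eqE eq_sym (negbTE ne).
Qed.

Lemma covr_multippi_est : covr Pr est est = objective coll Sigma n lam.
Proof.
have L2_terms I : used I -> (fun w => (n I)%:R^-1 * group_sum I w) \in Lfun Pr 2%:E.
  by move=> _; apply: (Lfun_scalel _ two_ge1) => //; exact: Lfun2_group_sum.
have est_L2 := Lfun2_multippi_est; rewrite estE in est_L2 *.
rewrite covr_suml // /objective; apply: eq_bigr => I uI.
rewrite (covrZl _ (Lfun2_group_sum I) est_L2) covr_sumr ?Lfun2_group_sum //.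
rewrite (bigD1 I uI) /= big1 ?addr0 => [|I' /andP[uI' ne]].
  rewrite covrZr ?Lfun2_group_sum // covr_group_sum // eqxx.
  have : (n I)%:R != 0 :> R by case/andP: uI => _ h; rewrite pnatr_eq0 -lt0n.
  by move=> nI0; field.
by rewrite covrZr ?Lfun2_group_sum // covr_group_sum // eq_sym (negbTE ne) mulr0.
Qed.

Lemma Er_group_sum I : Er Pr (group_sum I) = (n I)%:R * \sum_(i < k) lam I i 0 * Er Pr (X i).
Proof.
rewrite /group_sum Er_sum => [|j _]; last exact/Lfun2_Lfun1/Lfun2_sample_stat.
rewrite (eq_bigr (fun=> \sum_(i < k) lam I i 0 * Er Pr (X i))).
  by rewrite big_const_ord iter_addr_0 mulr_natl.
move=> j _; rewrite /sample_stat Er_sum => [|i _]; last exact/Lfun2_Lfun1/(Lfun_scalel _ two_ge1).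
apply: eq_bigr => i _; rewrite Er_scale ?(Lfun2_Lfun1 (Lfun2_Xs _ _)) //.
by rewrite /Er (expectation_sample HX2 Hlaw).
Qed.

Hypothesis Hu : unbiased coll n lam.

Lemma Er_multippi_est : Er Pr est = ((e1 R k)^T *m mean_vec Pr (fun i => X i)) 0 0.
Proof.
rewrite estE Er_sum => [|I _]; last exact/Lfun2_Lfun1/(Lfun_scalel _ two_ge1)/Lfun2_group_sum.
under eq_bigr => I uI.
  rewrite Er_scale ?(Lfun2_Lfun1 (Lfun2_group_sum I)) // Er_group_sum.
  rewrite mulrA mulVf ?mul1r; last first.
    by case/andP: uI => _ h; rewrite pnatr_eq0 -lt0n.
  over.
rewrite exchange_big /= mxE; apply: eq_bigr => i _.
rewrite -mulr_suml !mxE; congr (_ * _).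
by have := congr1 (fun M : 'cV[R]_k => M i 0) Hu; rewrite /= summxE => ->; rewrite mxE.
Qed.

Lemma mse_multippi_est :
  ('E_Pr[fun w => ((est w - ((e1 R k)^T *m mean_vec Pr (fun i => X i)) 0 0) ^+ 2)%R] =
   (objective coll Sigma n lam)%:E)%E.
Proof.
set th := (_ *m _) 0 0.
have est_L1 := Lfun2_Lfun1 Lfun2_multippi_est.
have E_est : ('E_Pr[est] = th%:E)%E.
  by rewrite /th -Er_multippi_est /Er fineK //; exact: expectation_fin_num.
pose D := (est \- cst th)%R.
have D_L2 : D \in Lfun Pr 2%:E.
  by apply: rpredB; [exact: Lfun2_multippi_est|exact: Lfun_cst].
have E_D : ('E_Pr[D] = 0)%E by rewrite expectationB ?Lfun_cst // E_est expectation_cst subee.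
have := varianceE D_L2.
rewrite /D (varianceB_cst_r _ Lfun2_multippi_est) /variance.
rewrite (covr_fin Lfun2_multippi_est Lfun2_multippi_est) covr_multippi_est.
by rewrite -/D E_D exprfctE expe2 mule0 sube0 => <-.
Qed.

End multippi_moments.

Lemma le_add_scale_inf (R : realType) (S : set R) (x y a : R) : (S !=set0)%classic ->
  0 <= a -> (forall v, S v -> x <= y + a * v) -> x <= y + a * inf S.
Proof.
move=> S0 a0 HS; case: (eqVneq a 0) => [a_eq0|an0].
  by have [v Sv] := S0; move: (HS v Sv); rewrite a_eq0 !mul0r.
have apos : 0 < a by rewrite lt_neqAle eq_sym an0.
have lb : lbound S ((x - y) / a).
  by move=> v Sv; rewrite ler_pdivrMr // mulrC lerBlDl HS.
by rewrite -lerBlDl mulrC -ler_pdivrMr // (lb_le_inf S0 lb).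
Qed.

(* If [x <= v] then [D x <= D v]; otherwise [h <= (1 + D) v <= x + D v].
   Either way [h <= x + D v], and [2 D h <= 2 D (3/2) v]. *)
Lemma perturbation_ineq (R : realFieldType) (D o h x v : R) : 0 <= D -> D <= 1 / 2 -> 0 <= v ->
  o <= (1 + 2 * D) * h -> h <= (1 + D) * x -> h <= (1 + D) * v -> o <= x + 4 * D * v.
Proof.
move=> D0 D12 v0 ho hx hv.
have h_le : h <= x + D * v.
  rewrite mulrDl mul1r in hx hv.
  case: (leP x v) => [xv|vx]; last lra.
  by have := ler_wpM2l D0 xv; lra.
have : 2 * D * h <= 2 * D * ((1 + D) * v) by rewrite ler_wpM2l ?mulr_ge0.
have : 2 * D * ((1 + D) * v) <= 2 * D * (3 / 2 * v).
  by rewrite ler_wpM2l ?mulr_ge0 // ler_wpM2r //; lra.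
rewrite mulrDl mul1r in ho; lra.
Qed.

Section multippi_program.
Variable R : realType.
Variables (k m : nat) (i1 : 'I_k) (coll : {set {set 'I_k}}).
Variables (c : {set 'I_k} -> 'rV[R]_m) (B : 'rV[R]_m).
Hypothesis Hi1 : nat_of_ord i1 = 0%N.
Implicit Types (A : 'M[R]_k) (lam : {set 'I_k} -> 'cV[R]_k).

Lemma e1E (i : 'I_k) : e1 R k i 0 = (i == i1)%:R.
Proof.
rewrite mxE; congr (nat_of_bool _)%:R; apply/eqP/eqP => [h|->] //.
by apply: val_inj; rewrite /= h Hi1.
Qed.

Lemma sum_e1_support (F : 'I_k -> R) : (forall i, i != i1 -> F i = 0) -> \sum_i F i = F i1.
Proof. by move=> H; rewrite (bigD1 i1) //= big1 ?addr0. Qed.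

Lemma quad_e1 A : quad A (e1 R k) = A i1 i1.
Proof.
rewrite quadE sum_e1_support => [|i ne]; last first.
  by apply: big1 => j _; rewrite !e1E (negbTE ne) !mul0r.
rewrite sum_e1_support => [|j ne]; last by rewrite !e1E (negbTE ne) mulr0.
by rewrite !e1E eqxx mul1r mulr1.
Qed.

Lemma sqnorm_e1 : sqnorm (e1 R k) = 1.
Proof.
rewrite /sqnorm sum_e1_support => [|i ne]; last by rewrite e1E (negbTE ne) expr0n.
by rewrite e1E eqxx expr1n.
Qed.

Definition classical_alloc (I0 : {set 'I_k}) (n0 : nat) : {set 'I_k} -> nat :=
  fun I => if I == I0 then n0 else 0%N.
Definition classical_weights (I0 : {set 'I_k}) : {set 'I_k} -> 'cV[R]_k :=
  fun I => if I == I0 then e1 R k else 0.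

Lemma admissible_classical I0 n0 : I0 \in coll -> i1 \in I0 -> (1 <= n0)%N ->
  (forall r, n0%:R * c I0 0 r <= B 0 r) ->
  admissible coll c B (classical_alloc I0 n0) (classical_weights I0).
Proof.
rewrite /classical_alloc /classical_weights => I0c i1I0 n01 Hn0; split; [split|split].
- by move=> I; case: eqP => // ->; rewrite I0c.
- move=> r; rewrite (bigD1 I0) //= big1 => [|I /andP[_ /negbTE ->]]; last by rewrite mul0r.
  by rewrite eqxx addr0.
- move=> I i iI; case: eqP => [eI|_]; last by rewrite mxE.
  by rewrite e1E; case: eqP => // ei; move: iI; rewrite eI ei i1I0.
- rewrite /unbiased (bigD1 I0) /=; last by rewrite I0c eqxx.
  rewrite big1 => [|I /andP[/andP[_]]]; first by rewrite eqxx addr0.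
  by case: eqP.
Qed.

Lemma objective_classical A I0 n0 : I0 \in coll -> (1 <= n0)%N ->
  objective coll A (classical_alloc I0 n0) (classical_weights I0) = A i1 i1 / n0%:R.
Proof.
rewrite /classical_alloc /classical_weights => I0c n01.
rewrite /objective (bigD1 I0) /=; last by rewrite I0c eqxx.
rewrite big1 => [|I /andP[/andP[_]]]; last by case: eqP.
by rewrite eqxx addr0 quad_e1 mulrC.
Qed.

Definition weight_mass (n : {set 'I_k} -> nat) lam : R :=
  \sum_(I in coll | (0 < n I)%N) (n I)%:R^-1 * sqnorm (lam I).

Lemma weight_mass_ge0 (n : {set 'I_k} -> nat) lam : 0 <= weight_mass n lam.
Proof. by apply: sumr_ge0 => I _; rewrite mulr_ge0 ?invr_ge0 ?ler0n ?sqnorm_ge0. Qed.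

Lemma weight_mass_le_objective A (a : R) (n : {set 'I_k} -> nat) lam :
  (forall v, a * sqnorm v <= quad A v) -> a * weight_mass n lam <= objective coll A n lam.
Proof.
move=> H; rewrite /weight_mass /objective mulr_sumr; apply: ler_sum => I _.
by rewrite mulrCA ler_wpM2l ?invr_ge0 ?ler0n.
Qed.

Lemma objective_perturb A A' (n : {set 'I_k} -> nat) lam :
  objective coll A n lam <= objective coll A' n lam + frob (A - A') * weight_mass n lam.
Proof.
rewrite /weight_mass /objective mulr_sumr -big_split /=; apply: ler_sum => I _.
rewrite mulrCA -mulrDr ler_wpM2l ?invr_ge0 ?ler0n // -lerBlDl -quadBl.
exact: le_trans (ler_norm _) (quad_abs_le _ _).
Qed.

Lemma objective_gt0 A (n : {set 'I_k} -> nat) lam : sym_posdef A -> unbiased coll n lam ->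
  0 < objective coll A n lam.
Proof.
move=> [_ A_pd] Hu.
case: (pselect (exists I, [&& I \in coll, (0 < n I)%N & lam I != 0])).
  move=> [I /and3P[Ic nI lI]].
  rewrite /objective (bigD1 I) /=; last by rewrite Ic nI.
  rewrite ltr_pwDl ?mulr_gt0 ?invr_gt0 ?ltr0n ?A_pd // sumr_ge0 // => J _.
  rewrite mulr_ge0 ?invr_ge0 ?ler0n //; case: (eqVneq (lam J) 0) => [->|]; first by rewrite quad0.
  by move/A_pd/ltW.
move=> none; suff : e1 R k i1 0 = 0 by rewrite e1E eqxx => /eqP; rewrite oner_eq0.
rewrite -Hu summxE big1 // => I /andP[Ic nI].
case: (eqVneq (lam I) 0) => [->|lI]; first by rewrite mxE.
by case: none; exists I; rewrite Ic nI lI.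
Qed.

Lemma largest_feasible_count I0 : (exists r, 0 < c I0 0 r) -> (forall r, c I0 0 r <= B 0 r) ->
  exists n0, [/\ (1 <= n0)%N, forall r, n0%:R * c I0 0 r <= B 0 r &
    forall n', (forall r, n'%:R * c I0 0 r <= B 0 r) -> (n' <= n0)%N].
Proof.
move=> [r0 c_gt0] cB; pose P n' := [forall r, n'%:R * c I0 0 r <= B 0 r].
have P1 : P 1%N by apply/forallP => r; rewrite mul1r.
have P_le n' : P n' -> leq n' (Num.truncn (B 0 r0 / c I0 0 r0)).
  move=> /forallP /(_ r0) Hn'.
  have B_ge0 : 0 <= B 0 r0 / c I0 0 r0.
    by rewrite divr_ge0 // ltW // (lt_le_trans c_gt0 (cB r0)).
  by rewrite (truncn_ge_nat _ B_ge0) ler_pdivlMr.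
have exP : exists n', P n' by exists 1%N.
have [n0 /forallP Pn0 n0_max] := ex_maxnP exP P_le.
by exists n0; split => // [|n' Hn']; apply: n0_max => //; apply/forallP.
Qed.

(* A budget that is free for [I0] would make every [n0 * I0] feasible, driving
   the minimal objective, which is positive, down to [0]. *)
Lemma minimizer_cost_pos Sh (n : {set 'I_k} -> nat) lam I0 : sym_posdef Sh ->
  is_minimizer coll c B Sh n lam -> I0 \in coll -> i1 \in I0 ->
  (forall r, 0 <= c I0 0 r) -> (forall r, c I0 0 r <= B 0 r) -> exists r, 0 < c I0 0 r.
Proof.
move=> Sh_pd [[_ [_ Hu]] Hopt] I0c i1I0 c_ge0 cB; apply/not_existsP => c_le0.
have c0 r : c I0 0 r = 0 by apply/eqP; rewrite eq_le c_ge0 andbT leNgt; exact/negP/c_le0.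
have h_gt0 := objective_gt0 Sh_pd Hu; set h := objective _ _ _ _ in h_gt0.
pose N := (Num.truncn (Sh i1 i1 / h)).+1.
have feasN r : N%:R * c I0 0 r <= B 0 r.
  by rewrite c0 mulr0 -(c0 r) cB.
have := Hopt _ _ (admissible_classical I0c i1I0 (ltn0Sn _) feasN).
rewrite objective_classical // -/h ler_pdivlMr ?ltr0n // => hN.
have := truncnS_gt (Sh i1 i1 / h); rewrite -/N ltr_pdivrMr // mulrC => Nh.
by have := lt_le_trans Nh hN; rewrite ltxx.
Qed.

Section perturbation.
Variables (Sig Sh : 'M[R]_k) (gam : R).
Variables (n : {set 'I_k} -> nat) (lam : {set 'I_k} -> 'cV[R]_k).
Hypotheses (gam_gt0 : 0 < gam) (Sig_ge : forall v, gam * sqnorm v <= quad Sig v).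
Hypotheses (Sh_close : frob (Sh - Sig) <= gam / 2) (Hmin : is_minimizer coll c B Sh n lam).

Let dist := frob (Sh - Sig).
Let D := dist / gam.
Let h := objective coll Sh n lam.

Let D_ge0 : 0 <= D. Proof. by rewrite divr_ge0 ?frob_ge0 // ltW. Qed.
Let D_le_half : D <= 1 / 2. Proof. by rewrite ler_pdivrMr // mul1r mulrC. Qed.
Let distE : dist = D * gam. Proof. by rewrite /D divfK // gt_eqF. Qed.

Lemma quad_Sh_ge v : (gam - dist) * sqnorm v <= quad Sh v.
Proof.
have := quad_abs_le (Sh - Sig) v; rewrite quadBl ler_norml -/dist => /andP[H _].
by have := Sig_ge v; rewrite mulrBl; lra.
Qed.

Lemma minimizer_le_admissible n' lam' : admissible coll c B n' lam' ->
  h <= (1 + D) * objective coll Sig n' lam'.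
Proof.
move=> adm'; have := Hmin.2 _ _ adm'; have := objective_perturb Sh Sig n' lam'.
have := weight_mass_le_objective n' lam' Sig_ge.
have := weight_mass_ge0 n' lam'.
rewrite -/dist -/h distE; set W := weight_mass _ _.
by move=> W0 gW; rewrite mulrDl mul1r -mulrA; have := ler_wpM2l D_ge0 gW; lra.
Qed.

Lemma objective_le_minimizer : objective coll Sig n lam <= (1 + 2 * D) * h.
Proof.
have := objective_perturb Sig Sh n lam; rewrite frob_subC -/dist.
have := weight_mass_le_objective n lam quad_Sh_ge; rewrite -/h.
have := weight_mass_ge0 n lam; set W := weight_mass _ _.
move=> W0 hW; have W_le : gam / 2 * W <= h.
  by apply: le_trans hW; rewrite ler_wpM2r //; have := Sh_close; rewrite -/dist; lra.
have D2 : 0 <= 2 * D by rewrite mulr_ge0.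
have := ler_wpM2l D2 W_le; rewrite distE => H1 H2.
have E : D * gam * W = 2 * D * (gam / 2 * W) by field.
have -> : (1 + 2 * D) * h = h + 2 * D * h by ring.
lra.
Qed.

Lemma minimizer_le_classical I0 n0 : I0 \in coll -> i1 \in I0 -> (1 <= n0)%N ->
  (forall r, n0%:R * c I0 0 r <= B 0 r) -> h <= (1 + D) * (Sig i1 i1 / n0%:R).
Proof.
move=> I0c i1I0 n01 Hn0.
have := Hmin.2 _ _ (admissible_classical I0c i1I0 n01 Hn0).
rewrite objective_classical // -/h => h_le.
have n0_gt0 : 0 < n0%:R :> R by rewrite ltr0n.
have Sh11 : Sh i1 i1 <= Sig i1 i1 + dist.
  have := quad_abs_le (Sh - Sig) (e1 R k).
  by rewrite quadBl !quad_e1 sqnorm_e1 mulr1 -/dist ler_norml => /andP[_]; lra.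
have gam_le : gam <= Sig i1 i1 by have := Sig_ge (e1 R k); rewrite sqnorm_e1 quad_e1 mulr1.
apply: (le_trans h_le); rewrite mulrA ler_wpM2r ?invr_ge0 ?(ltW n0_gt0) // mulrDl mul1r.
by apply: (le_trans Sh11); rewrite lerD2l distE ler_wpM2l.
Qed.

Lemma objective_le_VB_classical I0 n0 : I0 \in coll -> i1 \in I0 -> (1 <= n0)%N ->
  (forall r, n0%:R * c I0 0 r <= B 0 r) ->
  objective coll Sig n lam <= V_B coll c B Sig + 4 * D * (Sig i1 i1 / n0%:R).
Proof.
move=> I0c i1I0 n01 Hn0.
have v0 : 0 <= Sig i1 i1 / n0%:R.
  have := Sig_ge (e1 R k); rewrite sqnorm_e1 quad_e1 mulr1 => gam_le.
  by rewrite divr_ge0 // (le_trans (ltW gam_gt0)).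
have adm0 := admissible_classical I0c i1I0 n01 Hn0.
rewrite -lerBlDr; apply: lb_le_inf.
  by exists (objective coll Sig (classical_alloc I0 n0) (classical_weights I0)),
    (classical_alloc I0 n0), (classical_weights I0).
move=> _ [n' [lam' [adm' ->]]]; rewrite lerBlDr.
apply: (perturbation_ineq D_ge0 D_le_half v0 objective_le_minimizer).
  exact: minimizer_le_admissible.
exact: minimizer_le_classical I0c i1I0 n01 Hn0.
Qed.

Lemma objective_le_VB_sigma2 : sym_posdef Sh ->
  (forall I r, I \in coll -> 0 <= c I 0 r) ->
  (exists2 I0, I0 \in coll & i1 \in I0 /\ forall r, c I0 0 r <= B 0 r) ->
  objective coll Sig n lam <=
  V_B coll c B Sig + 4 * sigma2_classical coll c B Sig i1 / gam * dist.
Proof.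
move=> Sh_pd c_ge0 [I0 I0c [i1I0 cB]].
have -> : 4 * sigma2_classical coll c B Sig i1 / gam * dist =
  4 * D * sigma2_classical coll c B Sig i1 by rewrite /D; ring.
apply: le_add_scale_inf; last 2 first.
- by rewrite mulr_ge0.
- move=> _ [I1 [n1 [I1c i1I1 n11 [Hn1 _] ->]]].
  exact: (objective_le_VB_classical I1c i1I1 n11 Hn1).
have c_pos := minimizer_cost_pos Sh_pd Hmin I0c i1I0 (c_ge0 I0^~ I0c) cB.
have [n0 [n01 Hn0 n0_max]] := largest_feasible_count c_pos cB.
by exists (Sig i1 i1 / n0%:R), I0, n0.
Qed.

End perturbation.

End multippi_program.

Theorem theorem3 (R : realType) (d : measure_display) (T : measurableType d)
    (Pr : probability T R)
    (k m : nat) (i1 : 'I_k) (Hi1 : nat_of_ord i1 = 0%N)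
    (coll : {set {set 'I_k}}) (Hcoll : forall I, I \in coll -> I != finset.set0)
    (c : {set 'I_k} -> 'rV[R]_m) (Hc : forall I r, I \in coll -> 0 <= c I 0 r)
    (B : 'rV[R]_m) (HB : forall r, 0 <= B 0 r)
    (Hcl : exists2 I0, I0 \in coll & i1 \in I0 /\ forall r, c I0 0 r <= B 0 r)
    (X : 'I_k -> {RV Pr >-> R}) (HX2 : forall i, (X i : T -> R) \in Lfun Pr 2%:E)
    (gamma_min : R)
    (Hgev : eigenvalue (cov_mx Pr (fun i => X i)) gamma_min)
    (Hgmin : forall g, eigenvalue (cov_mx Pr (fun i => X i)) g -> gamma_min <= g)
    (Hgpos : 0 < gamma_min)
    (Sigma_hat : 'M[R]_k) (HSh : sym_posdef Sigma_hat)
    (Hclose : frob (Sigma_hat - cov_mx Pr (fun i => X i)) <= gamma_min / 2)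
    (n : {set 'I_k} -> nat) (lam : {set 'I_k} -> 'cV[R]_k)
    (Hmin : is_minimizer coll c B Sigma_hat n lam)
    (Xs : {set 'I_k} * nat -> 'I_k -> {RV Pr >-> R})
    (Hlaw : forall f, same_law Pr (fun i => Xs f i) (fun i => X i))
    (Hind : mutually_independent Pr
              (fun f : {set 'I_k} * nat => f.1 \in coll /\ (f.2 < n f.1)%N)
              (fun f i => Xs f i)) :
  let Sigma := cov_mx Pr (fun i => X i) in
  let theta_star := (e1 R k)^T *m mean_vec Pr (fun i => X i) in
  ('E_Pr[fun w => ((multippi_est coll n lam (fun f i => Xs f i) w - theta_star 0 0) ^+ 2)%R]
     <= (V_B coll c B Sigma
         + 4 * sigma2_classical coll c B Sigma i1 / gamma_min
           * frob (Sigma_hat - Sigma))%:E)%E.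
Proof.
cbv zeta; have [[_ [_ Hu]] _] := Hmin.
rewrite (mse_multippi_est HX2 Hlaw Hind Hu) lee_fin.
set Sigma := cov_mx Pr (fun i => X i).
have Sigma_sym : Sigma^T = Sigma.
  by apply/matrixP => i j; rewrite !mxE covarianceC.
have Sigma_ge := quad_ge_min_eigenvalue Sigma_sym Hgmin.
exact: (objective_le_VB_sigma2 Hi1 Hgpos Sigma_ge Hclose Hmin HSh Hc Hcl).
Qed.
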